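(* For every fixed positive integer $n_0$, all sufficiently large superabundant numbers are multiples of $n_0$; that is, only finitely many superabundant numbers are not divisible by $n_0$.
   Context: For a positive integer $n$, $\sigma(n)=\sum_{d\mid n} d$. A positive integer $s$ is superabundant if $\sigma(n)/n<\sigma(s)/s$ for all integers $0<n<s$. *)

From mathcomp Require Import all_boot all_order all_algebra.
Set Implicit Arguments. Unset Strict Implicit. Unset Printing Implicit Defensive.
Import Order.TTheory GRing.Theory Num.Theory.

Definition sigma (n : nat) : nat := \sum_(d < n.+1 | d %| n) d.

Definition abund (n : nat) : rat := ((sigma n)%:R / n%:R)%R.

Definition superabundant (s : nat) : Prop :=
  0 < s /\ forall n : nat, 0 < n -> n < s -> (abund n < abund s)%R.

From mathcomp Require Import all_boot all_order all_algebra ring zify.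
Import Order.TTheory GRing.Theory Num.Theory.

Set Implicit Arguments.
Unset Strict Implicit.
Unset Printing Implicit Defensive.

(* By the local-to-global principle for divisibility it suffices to show, for
   each prime power p^e, that p^e divides every large superabundant s.  The
   tool is an exchange argument: if q is another prime with q^t | s and
   p < q^t, then m = s * p / q^t < s, so sigma(m)/m < sigma(s)/s; expanding
   sigma multiplicatively turns this into an inequality between geometric sums
   (lemma [exchange]).  If the exponent of p in s is below e, then taking t = 1
   bounds every prime factor q of s by p^(e+1), and taking t = p bounds every
   exponent by p + p^(e+1).  Such an s divides (p^(e+1))!^(p + p^(e+1)), so it
   is bounded.  Finitely many such eventual statements, one for each prime
   factor of n0, combine into the theorem. *)

Lemma sigmaE (n : nat) : 0 < n -> sigma n = \sum_(d <- divisors n) d.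
Proof.
move=> n_gt0; rewrite /sigma -(big_mkord (fun d => d %| n) (fun d => d)) -big_filter.
apply: perm_big; apply: uniq_perm; rewrite ?filter_uniq ?iota_uniq ?divisors_uniq //.
move=> d; rewrite mem_filter mem_iota -dvdn_divisors //.
by case: (boolP (d %| n)) => //= d_n; rewrite add0n ltnS dvdn_leq.
Qed.

Lemma gcdn_mul_coprime (a x y : nat) : x %| a -> coprime a y -> gcdn a (x * y) = x.
Proof. by move=> x_a co_ay; rewrite Gauss_gcdl // (gcdn_idPr x_a). Qed.

Lemma divisor_coprime_split (a b d : nat) : coprime a b -> d %| a * b ->
  d = gcdn d a * gcdn d b.
Proof.
move=> co_ab d_ab; apply/eqP; rewrite eqn_dvd; apply/andP; split.
  have d_gab : d %| gcdn d a * b by rewrite muln_gcdl dvdn_gcd dvdn_mulr.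
  have d_ad : d %| gcdn d a * d by rewrite dvdn_mull.
  have : d %| gcdn (gcdn d a * b) (gcdn d a * d) by rewrite dvdn_gcd d_gab d_ad.
  by rewrite -muln_gcdr [gcdn b d]gcdnC.
rewrite Gauss_dvd ?dvdn_gcdl //.
by apply: coprime_dvdl (dvdn_gcdr _ _) _; apply: coprime_dvdr (dvdn_gcdr _ _) _.
Qed.

Lemma perm_divisorsM (a b : nat) : coprime a b -> 0 < a -> 0 < b ->
  perm_eq (divisors (a * b)) [seq x * y | x <- divisors a, y <- divisors b].
Proof.
move=> co_ab a_gt0 b_gt0; have ab_gt0 : 0 < a * b by rewrite muln_gt0 a_gt0.
apply: uniq_perm; first exact: divisors_uniq.
  apply: allpairs_uniq; rewrite ?divisors_uniq //.
  move=> [x1 y1] [x2 y2] /allpairsP[[u1 v1] [/= + + [-> ->]]].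
  move=> + + /allpairsP[[u2 v2] [/= + + [-> ->]]] /= eq12.
  rewrite -!dvdn_divisors // => u1a v1b u2a v2b.
  have u12 : u1 = u2.
    rewrite -(gcdn_mul_coprime u1a (coprime_dvdr v1b co_ab)) eq12.
    exact: gcdn_mul_coprime u2a (coprime_dvdr v2b co_ab).
  by move: eq12; rewrite u12 => /eqP; rewrite eqn_pmul2l ?(dvdn_gt0 a_gt0) // => /eqP->.
move=> d; apply/idP/allpairsP.
  rewrite -dvdn_divisors // => d_ab.
  exists (gcdn d a, gcdn d b); rewrite /= -!dvdn_divisors // !dvdn_gcdr.
  by rewrite -divisor_coprime_split.
by move=> [[x y] [/=]]; rewrite -!dvdn_divisors // => x_a y_b ->; apply: dvdn_mul.
Qed.

Lemma sigmaM (a b : nat) : coprime a b -> 0 < a -> 0 < b ->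
  sigma (a * b) = sigma a * sigma b.
Proof.
move=> co_ab a_gt0 b_gt0; rewrite !sigmaE ?muln_gt0 ?a_gt0 //.
rewrite (perm_big _ (perm_divisorsM co_ab a_gt0 b_gt0)) big_allpairs_dep big_distrl.
by apply: eq_bigr => x _; rewrite big_distrr.
Qed.

Definition geom (q k : nat) : nat := \sum_(i < k.+1) q ^ i.

(* The divisors of p^k are the powers p^i, i <= k. *)
Lemma sigma_pexp (p k : nat) : prime p -> sigma (p ^ k) = geom p k.
Proof.
move=> p_pr; have pk_gt0 : 0 < p ^ k by rewrite expn_gt0 prime_gt0.
rewrite sigmaE // /geom -(big_mkord xpredT (expn p)) -(big_map (expn p) xpredT id).
apply: perm_big; apply: uniq_perm; rewrite ?divisors_uniq ?map_inj_uniq ?iota_uniq //;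
  first exact/expnI/prime_gt1.
move=> d; rewrite -dvdn_divisors //; apply/(dvdn_pfactor _ _ p_pr)/mapP => -[i].
  by move=> i_k ->; exists i; rewrite // mem_iota ltnS.
by rewrite mem_iota ltnS => i_k ->; exists i.
Qed.

Lemma geomS (q k : nat) : geom q k.+1 = geom q k + q ^ k.+1.
Proof. by rewrite /geom big_ord_recr. Qed.

Lemma geom0 (q : nat) : geom q 0 = 1.
Proof. by rewrite /geom big_ord1. Qed.

Lemma geom_split (q a b : nat) : geom q (a + b).+1 = geom q a + q ^ a.+1 * geom q b.
Proof.
elim: b => [|b IH]; first by rewrite addn0 geomS geom0 muln1.
by rewrite addnS geomS IH geomS mulnDr addnA -expnD addSn addnS.
Qed.

Lemma geom_rec (q k : nat) : geom q k.+1 = 1 + q * geom q k.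
Proof. by rewrite -[k]add0n geom_split geom0 expn1. Qed.

Lemma geom_gt0 (q k : nat) : 0 < geom q k.
Proof. by case: k => [|k]; rewrite ?geom0 ?geom_rec. Qed.

Lemma geom_ge (q k : nat) : q ^ k <= geom q k.
Proof. by case: k => [|k]; rewrite ?geom0 ?geomS ?leq_addl. Qed.

Lemma geom_lt (q k : nat) : 1 < q -> geom q k < q ^ k.+1.
Proof.
move=> q_gt1; elim: k => [|k IH]; first by rewrite geom0 expn1.
rewrite geomS (expnS q k.+1).
apply: (@leq_trans (q ^ k.+1 + q ^ k.+1)); first by rewrite ltn_add2r.
by rewrite addnn -mul2n leq_mul2r q_gt1 orbT.
Qed.

Lemma abund_ltE (m s : nat) : 0 < m -> 0 < s ->
  (abund m < abund s)%R = (sigma m * s < sigma s * m).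
Proof.
move=> m_gt0 s_gt0; rewrite /abund ltr_pdivrMr ?ltr0n // mulrAC ltr_pdivlMr ?ltr0n //.
by rewrite -!natrM ltr_nat.
Qed.

(* n itself is a divisor of n, so sigma n > 0. *)
Lemma sigma_gt0 (n : nat) : 0 < n -> 0 < sigma n.
Proof. by move=> n_gt0; rewrite sigmaE // (big_rem n) ?divisors_id // addn_gt0 n_gt0. Qed.

Lemma two_prime_split (p q s : nat) : prime p -> prime q -> p != q -> 0 < s ->
  exists w, [/\ 0 < w, coprime p w, coprime q w & s = p ^ logn p s * (q ^ logn q s * w)].
Proof.
move=> p_pr q_pr pq s_gt0.
have [u co_pu def_s] := pfactor_coprime p_pr s_gt0.
have u_gt0 : 0 < u by move: s_gt0; rewrite def_s muln_gt0 => /andP[].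
have [w co_qw def_u] := pfactor_coprime q_pr u_gt0.
have w_gt0 : 0 < w by move: u_gt0; rewrite def_u muln_gt0 => /andP[].
have logq_s : logn q s = logn q u.
  rewrite def_s lognM ?expn_gt0 ?(prime_gt0 p_pr) // lognX (logn_prime q p_pr) eq_sym.
  by rewrite (negbTE pq) muln0 addn0.
exists w; split=> //; first by apply: coprime_dvdr co_pu; rewrite def_u dvdn_mulr.
by rewrite logq_s {1}def_s {1}def_u mulnC [w * _]mulnC.
Qed.

Lemma sigma_two_primes (p q a b w : nat) : prime p -> prime q -> p != q ->
  coprime p w -> coprime q w -> 0 < w ->
  sigma (p ^ a * (q ^ b * w)) = geom p a * (geom q b * sigma w).
Proof.
move=> p_pr q_pr pq co_pw co_qw w_gt0.
have co_pq : coprime p q by rewrite prime_coprime // dvdn_prime2.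
have [p_gt0 q_gt0] := (prime_gt0 p_pr, prime_gt0 q_pr).
rewrite sigmaM ?sigmaM ?sigma_pexp ?coprimeXl ?coprimeMr ?coprimeXr ?co_pq //;
  by rewrite ?muln_gt0 ?expn_gt0 ?p_gt0 ?q_gt0.
Qed.

(* Exchange inequality: if s is superabundant, q^t | s and p < q^t, then
   comparing s with the smaller number s * p / q^t yields
   q^t * (1 + ... + q^(j-t)) < p * (1 + ... + p^k) * (1 + ... + q^(t-1)),
   where k and j are the exponents of p and q in s. *)
Lemma exchange (p q s t : nat) : prime p -> prime q -> p != q -> superabundant s ->
  0 < t -> t <= logn q s -> p < q ^ t ->
  q ^ t * geom q (logn q s - t) < p * geom p (logn p s) * geom q t.-1.
Proof.
move=> p_pr q_pr pq [s_gt0 s_max] t_gt0 t_j p_qt.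
have [w [w_gt0 co_pw co_qw def_s]] := two_prime_split p_pr q_pr pq s_gt0.
move: t_j; set k := logn p s; set j := logn q s => t_j.
have [p_gt0 q_gt0] := (prime_gt0 p_pr, prime_gt0 q_pr).
have qj : q ^ j = q ^ (j - t) * q ^ t by rewrite -expnD subnK.
pose c := p ^ k * q ^ (j - t) * w.
have c_gt0 : 0 < c by rewrite !muln_gt0 !expn_gt0 p_gt0 q_gt0.
pose m := p ^ k.+1 * (q ^ (j - t) * w).
have m_gt0 : 0 < m by rewrite !muln_gt0 !expn_gt0 p_gt0 q_gt0.
have m_lt_s : m < s.
  have -> : m = c * p by rewrite /m /c expnS; ring.
  have -> : s = c * q ^ t by rewrite def_s qj /c; ring.
  by rewrite ltn_pmul2l.
have := s_max m m_gt0 m_lt_s; rewrite abund_ltE //.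
rewrite def_s !sigma_two_primes // geom_rec.
have -> : geom q j = geom q t.-1 + q ^ t * geom q (j - t).
  by rewrite -{2}(prednK t_gt0) -geom_split -addSn (prednK t_gt0) subnKC.
pose X := c * sigma w; have X_gt0 : 0 < X by rewrite muln_gt0 c_gt0 sigma_gt0.
rewrite qj.
have -> : (1 + p * geom p k) * (geom q (j - t) * sigma w) * (p ^ k * (q ^ (j - t) * q ^ t * w))
  = ((1 + p * geom p k) * geom q (j - t) * q ^ t) * X by rewrite /X /c; ring.
have -> : geom p k * ((geom q t.-1 + q ^ t * geom q (j - t)) * sigma w) * m
  = (geom p k * (geom q t.-1 + q ^ t * geom q (j - t)) * p) * X by rewrite /X /c /m expnS; ring.
rewrite ltn_pmul2r //; nia.
Qed.

Lemma dvdn_fact_expn (s b j : nat) : 0 < s ->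
  (forall q, prime q -> q %| s -> q <= b) -> (forall q, prime q -> logn q s <= j) ->
  s %| b`! ^ j.
Proof.
move=> s_gt0 prime_le exp_le; apply/dvdn_partP => // q; rewrite mem_primes.
case/and3P=> q_pr _ q_s; rewrite p_part pfactor_dvdn ?expn_gt0 ?fact_gt0 // lognX.
have q_fact : 0 < logn q b`!.
  by rewrite logn_gt0 mem_primes q_pr fact_gt0 dvdn_fact // prime_gt0 ?prime_le.
by apply: leq_trans (exp_le q q_pr) _; rewrite leq_pmulr.
Qed.

Section DeficientSuperabundant.

Variables (p e s : nat).
Hypotheses (p_pr : prime p) (s_sa : superabundant s) (s_def : logn p s < e).

Lemma deficient_pgeom_lt : p * geom p (logn p s) < p ^ e.+1.
Proof.
apply: (@leq_trans (p * p ^ (logn p s).+1)).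
  by rewrite ltn_pmul2l ?prime_gt0 ?geom_lt ?prime_gt1.
by rewrite -expnS leq_exp2l ?prime_gt1.
Qed.

(* Exchanging a single q for p: no prime factor reaches p^(e+1). *)
Lemma deficient_prime_bound (q : nat) : prime q -> q %| s -> q < p ^ e.+1.
Proof.
move=> q_pr q_s; have [-> | qp] := eqVneq q p.
  by rewrite -{1}(expn1 p) ltn_exp2l ?(prime_gt1 p_pr) //; lia.
rewrite ltnNge; apply/negP => big_q.
have pq : p != q by rewrite eq_sym.
have pgeom_lt := deficient_pgeom_lt.
have [s_gt0 _] := s_sa.
have j_gt0 : 0 < logn q s by rewrite logn_gt0 mem_primes q_pr q_s s_gt0.
have p_q1 : p < q ^ 1.
  by rewrite expn1 (leq_trans _ big_q) // (leq_ltn_trans _ pgeom_lt) // leq_pmulr ?geom_gt0.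
have := @exchange p q s 1 p_pr q_pr pq s_sa isT j_gt0 p_q1; rewrite expn1 geom0 muln1.
have := leq_pmulr q (geom_gt0 q (logn q s - 1)); lia.
Qed.

(* Exchanging q^p for p: no exponent reaches p + p^(e+1). *)
Lemma deficient_logn_bound (q : nat) : prime q -> logn q s < p + p ^ e.+1.
Proof.
move=> q_pr; have [-> | qp] := eqVneq q p.
  by have := ltn_expl e.+1 (prime_gt1 p_pr); lia.
rewrite ltnNge; apply/negP => big_j.
have pq : p != q by rewrite eq_sym.
have [p_gt0 q_gt1] := (prime_gt0 p_pr, prime_gt1 q_pr).
have p_j : p <= logn q s by apply: leq_trans big_j; apply: leq_addr.
have geom_p := geom_lt p.-1 q_gt1; rewrite prednK // in geom_p.
have pgeom_lt : p * geom p (logn p s) < geom q (logn q s - p).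
  apply: (leq_trans deficient_pgeom_lt); apply: (@leq_trans (logn q s - p)); first lia.
  exact: leq_trans (ltnW (ltn_expl _ q_gt1)) (geom_ge _ _).
have := exchange p_pr q_pr pq s_sa p_gt0 p_j (ltn_expl p q_gt1).
move: geom_p pgeom_lt; nia.
Qed.

End DeficientSuperabundant.

Lemma superabundant_pexp_dvd (p e : nat) : prime p ->
  exists N, forall s, superabundant s -> N <= s -> p ^ e %| s.
Proof.
move=> p_pr; exists ((p ^ e.+1)`! ^ (p + p ^ e.+1)).+1 => s s_sa.
have [s_gt0 _] := s_sa.
rewrite pfactor_dvdn // ltnNge; apply: contraR; rewrite -ltnNge => s_def.
apply: dvdn_leq; first by rewrite expn_gt0 fact_gt0.
apply: dvdn_fact_expn => // q q_pr.
- by move=> q_s; exact/ltnW/(deficient_prime_bound p_pr s_sa s_def q_pr q_s).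
- exact/ltnW/(deficient_logn_bound p_pr s_sa s_def q_pr).
Qed.

Lemma eventually_all (T : eqType) (P : T -> nat -> Prop) (r : seq T) :
  (forall x, x \in r -> exists N, forall s, N <= s -> P x s) ->
  exists N, forall s, N <= s -> forall x, x \in r -> P x s.
Proof.
elim: r => [|y r IH] ev_r; first by exists 0.
have [N1 ev_y] := ev_r y (mem_head y r).
have [|N2 ev_rest] := IH; first by move=> x x_r; apply: ev_r; rewrite inE x_r orbT.
exists (maxn N1 N2) => s; rewrite geq_max => /andP[N1_s N2_s] x.
by rewrite inE => /predU1P[-> | x_r]; [apply: ev_y | apply: ev_rest].
Qed.

Theorem proposition1 (n0 : nat) (hn0 : 0 < n0) :
  exists N : nat, forall s : nat, superabundant s -> N <= s -> n0 %| s.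
Proof.
pose P p s := superabundant s -> p ^ logn p n0 %| s.
have [|N ev_all] := @eventually_all _ P (primes n0).
  move=> p; rewrite mem_primes => /andP[p_pr _].
  have [N ev_p] := superabundant_pexp_dvd (logn p n0) p_pr.
  by exists N => s N_s s_sa; apply: ev_p.
exists N => s s_sa N_s; apply/dvdn_partP => // p p_n0.
by rewrite p_part; apply: ev_all.
Qed.
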